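(* Let $\ell\ge1$ and $n\ge2$ be integers and $N=n^\ell$. The EBS design of order $\ell$ on $N$ nodes guarantees throughput $\frac{1}{2\ell}$ and has maximum latency at most $2\ell(n-1)$. In particular, if $r\le\frac12$ is such that $\ell=\frac1{2r}$ is an integer and $N^{1/\ell}$ is an integer, the EBS design of order $\ell$ on $N$ nodes guarantees throughput $r$ and has maximum latency at most $\frac1r\left(N^{2r}-1\right)$.
   Context: General definitions. A connection schedule of size $N$ and period $T\ge1$ is a sequence of permutations $\pi_0,\dots,\pi_{T-1}$ of the node set; write $\pi_t=\pi_{t\bmod T}$ for $t\in\mathbb Z$. Its virtual topology $G$ is the directed graph on (nodes)$\times\mathbb Z$ with virtual edges $(i,t)\to(i,t+1)$ and physical edges $(i,t)\to(\pi_t(i),t+1)$. The latency of a path in $G$ is its number of edges; $\mathcal P(a,b,t)$ is the set of paths from $(a,t)$ to some $(b,t')$. A flow is $f:\mathcal P\to[0,\infty)$ on the set $\mathcal P$ of all paths, with load $F(f,e)=\sum_{P\ni e}f(P)$; it is feasible if $F(f,e)\le1$ for all physical edges $e$. An oblivious routing scheme assigns to each $(a,b,t)$ a flow $R_{a,b,t}$ supported on $\mathcal P(a,b,t)$ of total value 1, periodic in $t$ with period $T$ (shifting paths by $T$). Maximum latency is the largest latency of a path with positive weight in some $R_{a,b,t}$. A demand function $D$ gives for each $t\in\mathbb Z$ a nonnegative $N\times N$ matrix $D(t)$; it requests throughput $\sup_t$ of the maximum row or column sum of $D(t)$. The scheme guarantees throughput $r$ if $f(R,D)=\sum_{a,b,t}D(t,a,b)R_{a,b,t}$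 is feasible for every $D$ requesting throughput at most $r$. EBS (Elementary Basis Scheme) of order $\ell$: nodes are identified with $(\mathbb Z/n)^\ell$, $N=n^\ell$; $\mathbf e_p$ ($0\le p<\ell$) is the standard basis vector. The period is $T=\ell(n-1)$; for $0\le p<\ell$ and $1\le s\le n-1$, $\pi_{(n-1)p+s-1}(\mathbf i)=\mathbf i+s\mathbf e_p$. The semi-path from $(a,t)$ to $b$ is built greedily: at the current vertex $(x,t')$, stop if $x=b$; otherwise write $t'\bmod T=(n-1)p+s-1$ and, if $(b-x)_p=s$ in $\mathbb Z/n$, traverse the physical edge to $(x+s\mathbf e_p,t'+1)$, else the virtual edge to $(x,t'+1)$. For $c\in[N]$, the path from $(a,t)$ to $b$ via $c$ is: the semi-path from $(a,t)$ to $c$, then virtual edges up to $(c,t+T)$, then the semi-path from $(c,t+T)$ to $b$. The EBS routing scheme sets $R_{a,b,t}$ to give weight $1/N$ to the path via $c$ for each of the $N$ nodes $c$, and weight $0$ to all other paths. *)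

From HB Require Import structures.
From mathcomp Require Import all_boot all_order all_algebra.
From mathcomp Require Import all_classical all_reals all_analysis.
Set Implicit Arguments. Unset Strict Implicit. Unset Printing Implicit Defensive.
Import Order.TTheory GRing.Theory Num.Theory.
Local Open Scope classical_set_scope.
Local Open Scope ring_scope.

(* A connection schedule is given by  pi : int -> V -> V  (pi t = pi_t,    *)
(* already periodic).  A vvertex of the virtual topology is (i, t).          *)
(* A vpath is a start vvertex together with the list of vedge kinds taken:    *)
(* true = physical vedge (i,t)->(pi_t i, t+1), false = virtual (i,t)->(i,t+1)*)
(* Edges are identified as (tail vvertex, kind); physical edges are (v,true).*)
Section VirtualTopology.
Variable V : finType.

Definition vvertex := (V * int)%type.
Definition vpath := (vvertex * seq bool)%type.
Definition vedge := (vvertex * bool)%type.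

Definition vstep (pi : int -> V -> V) (v : vvertex) (k : bool) : vvertex :=
  if k then (pi v.2 v.1, v.2 + 1) else (v.1, v.2 + 1).

Definition path_end (pi : int -> V -> V) (P : vpath) : vvertex :=
  foldl (vstep pi) P.1 P.2.

Fixpoint edges_from (pi : int -> V -> V) (v : vvertex) (s : seq bool)
  : seq vedge :=
  if s is k :: s' then (v, k) :: edges_from pi (vstep pi v k) s' else [::].

Definition path_edges (pi : int -> V -> V) (P : vpath) : seq vedge :=
  edges_from pi P.1 P.2.

Definition latency (P : vpath) : nat := size P.2.

Definition in_paths (pi : int -> V -> V) (a b : V) (t : int) (P : vpath) : bool :=
  (P.1 == (a, t)) && ((path_end pi P).1 == b).

Variable R : realType.

Definition load (pi : int -> V -> V) (f : vpath -> \bar R) (e : vedge) : \bar R :=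
  esum [set P : vpath | e \in path_edges pi P] f.

Definition feasible (pi : int -> V -> V) (f : vpath -> \bar R) : Prop :=
  forall v : vvertex, (load pi f (v, true) <= 1)%E.

(* A routing scheme: Rt a b t is the flow R_{a,b,t} on paths. *)
Definition demand_nonneg (D : int -> V -> V -> R) : Prop :=
  forall t a b, 0 <= D t a b.

(* D requests throughput at most r: sup_t of the max row/column sum of D(t)
   is at most r, i.e. every row and column sum of every D(t) is <= r *)
Definition requests_at_most (D : int -> V -> V -> R) (r : R) : Prop :=
  forall t : int,
    (forall a : V, \sum_(b : V) D t a b <= r) /\
    (forall b : V, \sum_(a : V) D t a b <= r).

Definition flow_of (Rt : V -> V -> int -> vpath -> R) (D : int -> V -> V -> R)
  : vpath -> \bar R :=
  fun P => esum [set: (V * V * int)%type]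
             (fun x => (D x.2 x.1.1 x.1.2 * Rt x.1.1 x.1.2 x.2 P)%:E).

Definition guarantees_throughput (pi : int -> V -> V)
  (Rt : V -> V -> int -> vpath -> R) (r : R) : Prop :=
  forall D : int -> V -> V -> R,
    demand_nonneg D -> requests_at_most D r -> feasible pi (flow_of Rt D).

Definition max_latency_le (Rt : V -> V -> int -> vpath -> R) (L : nat) : Prop :=
  forall a b t (P : vpath), 0 < Rt a b t P -> (latency P <= L)%N.

End VirtualTopology.

Section EBS.
Variables l n : nat.

Definition ebs_node := {ffun 'I_l -> 'Z_n}.

Definition ebs_T : nat := l * (n - 1).

(* for t' mod T = (n-1) p + s - 1 with 0 <= p < l, 1 <= s <= n-1 : (p, s) *)
Definition ebs_ps (t : int) : nat * nat :=
  let k := absz (modz t (ebs_T%:Z)) in (k %/ (n - 1), k %% (n - 1) + 1)%N.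

Definition ebs_vec (p s : nat) : ebs_node :=
  [ffun q : 'I_l => if val q == p then (s%:R : 'Z_n) else 0].

Definition ebs_pi (t : int) (x : ebs_node) : ebs_node :=
  x + ebs_vec (ebs_ps t).1 (ebs_ps t).2.

Definition coord_is (y : ebs_node) (p s : nat) : bool :=
  [exists q : 'I_l, (val q == p) && (y q == (s%:R : 'Z_n))].

(* greedy semi-vpath towards b from (x,t); fuel bounds the number of steps *)
Fixpoint semi (fuel : nat) (b x : ebs_node) (t : int) : seq bool :=
  if fuel is k.+1 then
    if x == b then [::]
    else if coord_is (b - x) (ebs_ps t).1 (ebs_ps t).2
         then true :: semi k b (ebs_pi t x) (t + 1)
         else false :: semi k b x (t + 1)
  else [::].

(* the semi-vpath from (a,t) to b (it reaches b within T steps) *)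
Definition semipath (a b : ebs_node) (t : int) : seq bool := semi ebs_T b a t.

Definition ebs_via (a b : ebs_node) (t : int) (c : ebs_node) : vpath ebs_node :=
  let s1 := semipath a c t in
  ((a, t), s1 ++ nseq (ebs_T - size s1) false ++ semipath c b (t + ebs_T%:Z)).

Variable R : realType.

Definition ebs_R (a b : ebs_node) (t : int) (P : vpath ebs_node) : R :=
  (#|[set c : ebs_node | ebs_via a b t c == P]|)%:R / (n ^ l)%:R.

End EBS.

Arguments ebs_pi l n t x : clear implicits.
Arguments ebs_R l n R a b t P : clear implicits.

From HB Require Import structures.
From mathcomp Require Import all_boot all_order all_algebra.
From mathcomp Require Import all_classical all_reals all_analysis.
From mathcomp Require Import zify ring lra.
From mathcomp Require finmap.
Import Order.TTheory GRing.Theory Num.Theory.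
Local Open Scope ring_scope.

(* Latency: each semi-path has at most T = l(n-1) edges and a routing path is
   a semi-path, virtual edges up to time t+T, then a second semi-path.

   Throughput: fix a physical edge e leaving (z, tau).  The greedy semi-path
   towards b only ever zeroes coordinates of the remaining difference b - x,
   so it takes e only if the difference d at that moment satisfies
   d_p = s, where (p, s) is the slot of time tau.  Since the semi-path is
   equivariant under translation of the nodes, the map (a, c) |-> c - a is
   injective on the pairs whose semi-path from time t uses e, hence at most
   |{d | d_p = s}| <= N/n such pairs exist for every t.  Semi-paths using e
   start during the T time steps preceding tau, and every flow of value 1/N
   from a (resp. to b) charges at most r/N per time step.  Summing the two
   halves of the routing paths gives load <= 2 T r / n <= 2 l r = 1.

   The form with r
   follows since l = 1/(2r) makes N^(2r) = n and 1/r = 2l. *)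

Section VirtualPaths.
Context {V : finType}.
Context {sched : int -> V -> V}.

Lemma vstep_time v k : (vstep sched v k).2 = v.2 + 1.
Proof. by case: k. Qed.

Lemma foldl_vstep_time v s : (foldl (vstep sched) v s).2 = v.2 + (size s)%:Z.
Proof.
elim: s v => [|k s IH] v /=; first by rewrite addr0.
by rewrite IH vstep_time; lia.
Qed.

Lemma foldl_virtual v k : foldl (vstep sched) v (nseq k false) = (v.1, v.2 + k%:Z).
Proof.
elim: k v => [|k IH] [x u] /=; first by rewrite addr0.
by rewrite IH /=; congr (_, _); lia.
Qed.

Lemma edges_from_cat v s s' : edges_from sched v (s ++ s') =
  edges_from sched v s ++ edges_from sched (foldl (vstep sched) v s) s'.
Proof. by elim: s v => [|k s IH] v //=; rewrite IH. Qed.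

Lemma edges_from_time {v s} {e : vedge V} : e \in edges_from sched v s ->
  v.2 <= e.1.2 /\ e.1.2 < v.2 + (size s)%:Z.
Proof.
elim: s v => [|k s IH] v //=; rewrite inE => /orP[/eqP -> /=|/IH].
  by split; lia.
by rewrite vstep_time => -[h1 h2]; split; lia.
Qed.

Lemma edges_from_kind {v s} {e : vedge V} : e \in edges_from sched v s -> e.2 \in s.
Proof.
elim: s v => [|k s IH] v //=; rewrite inE => /orP[/eqP -> /=|/IH].
  by rewrite inE eqxx.
by rewrite inE => ->; rewrite orbT.
Qed.

Lemma edges_from_time_inj {v s} {e e' : vedge V} : e \in edges_from sched v s ->
  e' \in edges_from sched v s -> e.1.2 = e'.1.2 -> e = e'.
Proof.
elim: s v => [|k s IH] v //=; rewrite !inE.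
move=> /orP[/eqP ->|h] /orP[/eqP ->|h'] //=.
- by move: (edges_from_time h'); rewrite vstep_time => -[h1 _] E; lia.
- by move: (edges_from_time h); rewrite vstep_time => -[h1 _] E; lia.
- exact: IH h h'.
Qed.

Lemma edges_from_equivariant (f : V -> V) :
  (forall t x, sched t (f x) = f (sched t x)) -> forall v s,
  edges_from sched (f v.1, v.2) s =
  map (fun e => ((f e.1.1, e.1.2), e.2)) (edges_from sched v s).
Proof.
move=> hf v s; elim: s v => [|k s IH] v //=.
have -> : vstep sched (f v.1, v.2) k = (f (vstep sched v k).1, (vstep sched v k).2).
  by case: k => //=; rewrite hf.
by rewrite IH.
Qed.

End VirtualPaths.

Section ExtendedSums.
Local Open Scope classical_set_scope.
Variable R : realType.

Lemma esum_swap (T1 T2 : choiceType) (I : set T1) (J : set T2)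
   (a : T1 -> T2 -> \bar R) :
  (forall i j, I i -> J j -> (0 <= a i j)%E) ->
  \esum_(i in I) \esum_(j in J) a i j = \esum_(j in J) \esum_(i in I) a i j.
Proof.
move=> a0; rewrite !esum_esum //; last by move=> i j ? ?; apply: a0.
rewrite (reindex_esum (I `*` J) _ (fun x => (x.2, x.1)))//; split=> //=.
- by move=> [i j] [/=].
- by move=> [i1 i2] [j1 j2] /= _ _ [] -> ->.
- by move=> [i1 i2] [Pi1 Qi2] /=; exists (i2, i1).
Qed.

Lemma esum_point (T : choiceType) (S : set T) (P0 : T) (k : R) : 0 <= k ->
  \esum_(P in S) ((k * (P0 == P)%:R)%:E) = (if P0 \in S then k else 0)%:E.
Proof.
move=> k0; rewrite (esumID [set P0]); last first.
  by move=> P _; rewrite lee_fin mulr_ge0.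
rewrite [X in _ + X]esum1 ?adde0; last first.
  move=> P [_ /= hP]; rewrite (_ : (P0 == P) = false) ?mulr0 //.
  by apply/negbTE; apply/eqP => h; apply: hP; rewrite h.
case: ifP => hS.
  rewrite (_ : S `&` [set P0] = [set P0]); last first.
    by apply/seteqP; split => [x [] //|x /= ->]; split => //; exact/set_mem.
  by rewrite esum_set1 ?eqxx ?mulr1 // lee_fin mulr_ge0.
rewrite (_ : S `&` [set P0] = set0) ?esum_set0 //.
apply/seteqP; split => [x [hx /= hx0]|x //].
by move: hS; rewrite hx0 in hx; rewrite (mem_set hx).
Qed.

Lemma fsbig_setT_finType (T : finType) (F : T -> \bar R) :
  \sum_(x \in [set: T]) F x = \sum_(x : T) F x.
Proof.
rewrite fsbig_finite; last exact: finite_finset.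
apply: perm_big; apply: uniq_perm; first exact: finmap.fset_uniq.
  exact: index_enum_uniq.
move=> x; rewrite mem_index_enum in_fset_set; last exact: finite_finset.
by rewrite in_setT.
Qed.

Lemma esum_time_window (V : finType) (T : nat) (t0 : int) (G : V * V * int -> R) :
  (forall x, 0 <= G x) ->
  (forall x, G x != 0 -> exists2 k : nat, (k < T)%N & x.2 = t0 - k%:Z) ->
  \esum_(x in [set: V * V * int]) (G x)%:E =
  (\sum_(k < T) \sum_(a : V) \sum_(b : V) G ((a, b), t0 - k%:Z))%:E.
Proof.
move=> G0 Gs.
pose e := fun y : V * V * 'I_T => ((y.1.1, y.1.2), t0 - (val y.2)%:Z).
rewrite (esumID (range e)); last by move=> x _; rewrite lee_fin.
rewrite [X in _ + X]esum1 ?adde0; last first.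
  move=> [[a b] t] [_ /= hx]; apply/eqP; rewrite eqe.
  apply/negPn/negP => /Gs [k hk ht].
  by apply: hx; exists ((a, b), Ordinal hk) => //=; rewrite /e /= -ht.
rewrite setTI esum_image; last first.
  move=> [[a b] k] [[a' b'] k'] _ _ [-> -> hk]; congr (_, _).
  by apply: val_inj => /=; lia.
rewrite esum_fset; [|exact: finite_finset|by move=> *; rewrite lee_fin].
rewrite fsbig_setT_finType sumEFin; congr (_%:E).
transitivity (\sum_(ab : V * V) \sum_(k < T) G (e (ab, k))).
  by rewrite pair_bigA.
rewrite exchange_big; apply: eq_bigr => k _.
by rewrite -(pair_bigA _ (fun a b => G (e ((a, b), k)))).
Qed.

End ExtendedSums.

Lemma sum_indicator (R : pzSemiRingType) (T : finType) (p : pred T) :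
  ((\sum_(x : T) (p x)%:R) : R) = (#|[set x | p x]|)%:R.
Proof.
rewrite -sum1_card natr_sum [RHS]big_mkcond /=; apply: eq_bigr => x _.
by rewrite inE; case: (p x).
Qed.

Lemma sum_indicator_classic (R : pzSemiRingType) (T : finType) (p : pred T) :
  (#|[set x | p x]%classic|%:R : R) = \sum_(x : T) (p x)%:R.
Proof.
rewrite sum_indicator; congr (_%:R); apply: eq_card => x; rewrite inE.
by apply/idP/idP => [/set_mem|/mem_set].
Qed.

Section UniformScheme.
Local Open Scope classical_set_scope.
Variables (R : realType) (V C : finType) (pi : int -> V -> V).
Variables (route : V -> V -> int -> C -> vpath V) (K : R).
Hypothesis K_gt0 : 0 < K.

Definition uniform_scheme (a b : V) (t : int) (P : vpath V) : R :=
  #|[set c : C | route a b t c == P]|%:R / K.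

Lemma uniform_scheme_load (D : int -> V -> V -> R) (e : vedge V) :
  demand_nonneg D ->
  load pi (flow_of uniform_scheme D) e =
  \esum_(x in [set: V * V * int])
     (\sum_(c : C) D x.2 x.1.1 x.1.2 / K *
        (e \in path_edges pi (route x.1.1 x.1.2 x.2 c))%:R)%:E.
Proof.
move=> D0; have w0 a b t : 0 <= D t a b / K by rewrite divr_ge0 // ltW.
rewrite /load /flow_of esum_swap; last first.
  by move=> P x _ _; rewrite lee_fin mulr_ge0 // divr_ge0 // ltW.
apply: eq_esum => -[[a b] t] _ /=.
transitivity (\esum_(P in [set P | e \in path_edges pi P])
  \sum_(c : C) ((D t a b / K * (route a b t c == P)%:R)%:E)).
  apply: eq_esum => P _; rewrite sumEFin /uniform_scheme.
  rewrite sum_indicator_classic mulr_suml mulr_sumr; congr (_%:E).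
  by apply: eq_bigr => c _; rewrite mulrA mulrAC.
rewrite esum_sum; last by move=> P c _ _; rewrite lee_fin mulr_ge0 ?w0.
rewrite -sumEFin; apply: eq_bigr => c _; rewrite esum_point //.
have -> : (route a b t c \in [set P | e \in path_edges pi P]) =
    (e \in path_edges pi (route a b t c)) by apply/idP/idP => [/set_mem|/mem_set].
by case: (e \in _); rewrite ?mulr1 ?mulr0.
Qed.

End UniformScheme.

Lemma demand_row_count (R : numDomainType) (V : finType) (w : V -> V -> R)
    (x : V -> V -> bool) (r : R) (M : nat) :
  (forall a b, 0 <= w a b) -> (forall a, \sum_(b : V) w a b <= r) -> 0 <= r ->
  \sum_(a : V) \sum_(c : V) ((x a c)%:R : R) <= M%:R ->
  \sum_(a : V) \sum_(b : V) \sum_(c : V) w a b * (x a c)%:R <= r * M%:R.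
Proof.
move=> w0 wr r0 xM.
have -> : \sum_(a : V) \sum_(b : V) \sum_(c : V) w a b * (x a c)%:R
    = \sum_(a : V) \sum_(c : V) (\sum_(b : V) w a b) * (x a c)%:R.
  by apply: eq_bigr => a _; rewrite exchange_big; apply: eq_bigr => c _;
    rewrite mulr_suml.
apply: le_trans (_ : \sum_(a : V) \sum_(c : V) r * (x a c)%:R <= _).
  by do 2![apply: ler_sum => ? _]; apply: ler_wpM2r.
under eq_bigr do rewrite -mulr_sumr.
by rewrite -mulr_sumr ler_wpM2l.
Qed.

Lemma demand_col_count (R : numDomainType) (V : finType) (w : V -> V -> R)
    (x : V -> V -> bool) (r : R) (M : nat) :
  (forall a b, 0 <= w a b) -> (forall b, \sum_(a : V) w a b <= r) -> 0 <= r ->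
  \sum_(c : V) \sum_(b : V) ((x c b)%:R : R) <= M%:R ->
  \sum_(a : V) \sum_(b : V) \sum_(c : V) w a b * (x c b)%:R <= r * M%:R.
Proof.
move=> w0 wr r0 xM; rewrite exchange_big /=.
apply: (@demand_row_count _ _ (fun b a => w a b) (fun b c => x c b)) => //.
by rewrite exchange_big.
Qed.

Section SemiPaths.
Context {l n : nat}.
Local Notation V := (ebs_node l n).
Local Notation pi := (ebs_pi l n).

Lemma ebs_pi_translate t (x y : V) : pi t (x + y) = pi t x + y.
Proof. by rewrite /ebs_pi addrAC. Qed.

Lemma semi_translate f (b x y : V) t : semi f (b + y) (x + y) t = semi f b x t.
Proof.
elim: f x t => //= f IH x t.
by rewrite (can_eq (addrK y)) opprD addrACA subrr addr0 ebs_pi_translate !IH.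
Qed.

Lemma size_semi f (b x : V) t : (size (semi f b x t) <= f)%N.
Proof.
elim: f x t => //= f IH x t; case: ifP => _ //; case: ifP => _ /=; exact: IH.
Qed.

Lemma physical_step_diff (b x : V) t q :
  coord_is (b - x) (ebs_ps l n t).1 (ebs_ps l n t).2 ->
  (b - pi t x) q = if val q == (ebs_ps l n t).1 then 0 else (b - x) q.
Proof.
move=> /existsP [q' /andP[/eqP hq' /eqP hv]].
rewrite /ebs_pi opprD addrA !ffunE.
case: eqP => hq; last by rewrite subr0.
have -> : q = q' by apply: val_inj; rewrite hq hq'.
by rewrite -hv !ffunE subrr.
Qed.

Lemma semi_edge_invariant {f} {b x : V} {t} {e : vedge V} :
  e \in edges_from pi (x, t) (semi f b x t) ->
  (forall q, (b - e.1.1) q = (b - x) q \/ (b - e.1.1) q = 0) /\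
  (e.2 -> coord_is (b - e.1.1) (ebs_ps l n e.1.2).1 (ebs_ps l n e.1.2).2).
Proof.
elim: f x t => //= f IH x t.
case: ifP => _ //.
case: ifP => hc /=; rewrite inE => /orP[/eqP -> /=|h].
- by split=> [q|_]; [left|].
- have [h1 h2] := IH _ _ h; split => // q.
  case: (h1 q) => ->; last by right.
  by rewrite physical_step_diff //; case: ifP => _; [right|left].
- by split=> [q|]; [left|].
- exact: IH h.
Qed.

End SemiPaths.

(* Within any T consecutive time steps the schedule visits every slot, so
   every semi-path reaches its target.  Here n = m + 2. *)
Section Reachability.
Variables l m : nat.
Local Notation n := m.+2.
Local Notation V := (ebs_node l n).
Local Notation pi := (ebs_pi l n).
Local Notation T := (ebs_T l n).

Lemma slot_value_nz tau : ((ebs_ps l n tau).2%:R : 'Z_n) != 0.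
Proof.
rewrite /ebs_ps /= subn1; set k := `|_|%N.
have hk : (k %% m.+1 < m.+1)%N by apply: ltn_pmod.
have hs : (k %% n.-1 + 1 < n)%N by rewrite /=; lia.
have := natr_Zp (Ordinal hs); rewrite /= => ->.
by apply/eqP => /(congr1 val) /=; lia.
Qed.

Lemma slot_occurs (q : 'I_l) (z : 'Z_n) t : z != 0 ->
  exists2 u : nat, (u < T)%N & ebs_ps l n (t + u%:Z) = (val q, val z).
Proof.
move=> nz.
have hz : (0 < val z)%N.
  by rewrite lt0n; apply: contra nz => /eqP h; apply/eqP/val_inj.
have hzn : (val z < m.+2)%N := ltn_ord z.
have hq : (val q < l)%N := ltn_ord q.
have hT : T = (l * m.+1)%N by rewrite /ebs_T subn1.
pose k := (q * m.+1 + (val z).-1)%N.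
have hk : (k < l * m.+1)%N.
  have : (q.+1 * m.+1 <= l * m.+1)%N by rewrite leq_mul2r hq orbT.
  by rewrite mulSn /k; lia.
set d := ((k%:Z - t) %% (l * m.+1)%:Z)%Z.
have d0 : 0 <= d by apply: modz_ge0; lia.
have dl : d < (l * m.+1)%:Z by apply: ltz_pmod; lia.
exists `|d|%N; first by rewrite hT; lia.
rewrite /ebs_ps hT gez0_abs // -/d /d modzDmr addrC subrK modz_small; last first.
  by apply/andP; split; lia.
rewrite absz_nat subn1 /= /k divnMDl // divn_small ?addn0; last by lia.
by rewrite modnMDl modn_small; [rewrite addn1 prednK|lia].
Qed.

Lemma semi_coord_progress f (b x : V) t q :
  let y := (foldl (vstep pi) (x, t) (semi f b x t)).1 in
  ((b - y) q = (b - x) q \/ (b - y) q = 0) /\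
  ((b - x) q != 0 ->
   (exists2 u : nat, (u < f)%N &
      ebs_ps l n (t + u%:Z) = (val q, val ((b - x) q))) ->
   (b - y) q = 0).
Proof.
elim: f x t => [|f IH] x t /=; first by split; [left|move=> _ []].
case: ifP => [/eqP -> | _] /=; first by rewrite subrr ffunE; split; [right|].
have shift u : t + 1 + u%:Z = t + u.+1%:Z by lia.
case: ifP => hc /=.
- have [h1 h2] := IH (pi t x) (t + 1).
  have sc := @physical_step_diff l n b x t q hc.
  split.
    case: h1 => ->; last by right.
    by rewrite sc; case: ifP => _; [right|left].
  move=> nz [[|u] hu hps].
    rewrite addr0 in hps.
    have hq : val q == (ebs_ps l n t).1 by rewrite hps.
    by move: sc; rewrite hq => sc; case: h1 => ->.
  case hq : (val q == (ebs_ps l n t).1); move: sc; rewrite hq => sc.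
    by case: h1 => ->.
  by apply: h2; [rewrite sc|exists u => //; rewrite sc shift].
- have [h1 h2] := IH x (t + 1).
  split => // nz [[|u] hu hps].
    rewrite addr0 in hps.
    suff : coord_is (b - x) (ebs_ps l n t).1 (ebs_ps l n t).2 by rewrite hc.
    by apply/existsP; exists q; rewrite hps /= eqxx /= natr_Zp.
  by apply: h2 => //; exists u; rewrite // shift.
Qed.

Lemma semipath_reaches (b x : V) t :
  foldl (vstep pi) (x, t) (semipath x b t) =
  (b, t + (size (semipath x b t))%:Z).
Proof.
have ht := foldl_vstep_time (sched := pi) (x, t) (semipath x b t).
case E : foldl ht => [y u] /= ->; congr (_, _).
apply/eqP; rewrite eq_sym -subr_eq0; apply/eqP/ffunP => q.
have [h1 h2] := semi_coord_progress T b x t q.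
rewrite /semipath E /= in h1 h2; rewrite [RHS]ffunE.
have [hz|hz] := eqVneq ((b - x) q) 0; first by case: h1 => ->.
by apply: h2 => //; exact: slot_occurs.
Qed.

End Reachability.

Section EdgeUsage.
Context {l m : nat}.
Local Notation n := m.+2.
Local Notation V := (ebs_node l n).
Local Notation pi := (ebs_pi l n).
Local Notation T := (ebs_T l n).

Definition semi_uses (e : vedge V) (a c : V) (t : int) : bool :=
  e \in edges_from pi (a, t) (semipath a c t).

Definition slot_matching (tau : int) : {set V} :=
  [set d : V | coord_is d (ebs_ps l n tau).1 (ebs_ps l n tau).2].

Lemma card_slot_matching tau : (#|slot_matching tau| * n <= n ^ l)%N.
Proof.
rewrite /slot_matching; set p := (ebs_ps l n tau).1; set s := (ebs_ps l n tau).2.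
have [hp|hp] := ltnP p l; last first.
  rewrite (_ : [set d | _] = finset.set0) ?cards0 //.
  apply/setP => d; rewrite !inE; apply/existsP => -[q /andP[/eqP hq _]].
  by have := ltn_ord q; rewrite hq; lia.
pose q0 := Ordinal hp; set A := [set d : V | _].
suff : (#|finset.setX A [set: 'Z_n]| <= #|[set: V]|)%N.
  by rewrite cardsX !cardsT card_ffun !card_ord.
pose h := fun dw : V * 'Z_n => [ffun q => if q == q0 then dw.2 else dw.1 q] : V.
rewrite -(@card_in_imset _ _ h); first exact/subset_leq_card/finset.subsetT.
move=> [d w] [d' w']; rewrite !inE /= => /andP[hd _] /andP[hd' _] E.
have Eq q : h (d, w) q = h (d', w') q by rewrite E.
have hw : w = w' by have := Eq q0; rewrite /h !ffunE eqxx.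
congr (_, _) => //; apply/ffunP => q.
have [->|nq] := eqVneq q q0; last by have := Eq q; rewrite /h !ffunE (negPf nq).
move: hd hd' => /existsP[q1 /andP[/eqP h1 /eqP v1]] /existsP[q2 /andP[/eqP h2 /eqP v2]].
have -> : q0 = q1 by apply: val_inj; rewrite h1.
by rewrite v1 (_ : q1 = q2) ?v2 //; apply: val_inj; rewrite h1 h2.
Qed.

(* The pairs (a, c) whose semi-path from time t uses the physical edge at
   (z, tau) are determined by c - a, which lies in slot_matching tau. *)
Lemma card_semi_users t tau (z : V) :
  (#|[set ac : V * V | semi_uses ((z, tau), true) ac.1 ac.2 t]|
   <= #|slot_matching tau|)%N.
Proof.
set A := [set ac : V * V | _].
rewrite -(@card_in_imset _ _ (fun ac : V * V => ac.2 - ac.1) A).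
  apply: subset_leq_card; apply/fintype.subsetP => _ /imsetP [[a c] hA ->].
  rewrite inE; move: hA; rewrite inE /= => hA.
  have [h1 h2] := semi_edge_invariant hA.
  have /existsP [q /andP[hq /eqP hv]] := h2 isT.
  apply/existsP; exists q; rewrite hq /=.
  case: (h1 q) => /= E; first by rewrite -E hv.
  by move: (slot_value_nz l m tau); rewrite -hv E eqxx.
move=> [a c] [a' c']; rewrite !inE /= => hA hA' E.
set y := a' - a.
have ha' : a' = a + y by rewrite /y addrC subrK.
have hc' : c' = c + y by rewrite -[c'](subrK a') -E ha' addrA subrK.
move: hA'; rewrite /semi_uses /semipath ha' hc' semi_translate.
rewrite (@edges_from_equivariant _ pi (fun x => x + y)
  (fun t x => ebs_pi_translate t x y) (a, t)).
move=> /mapP [[[z0 u0] k0] h0 [hz hu hk]].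
case: (edges_from_time_inj hA h0 hu) => hz0 _ _.
have y0 : y = 0 by apply: (@addrI _ z0); rewrite addr0 -hz hz0.
by rewrite y0 !addr0.
Qed.

Lemma semi_users_sum (R : numDomainType) t tau (z : V) :
  \sum_(a : V) \sum_(c : V) ((semi_uses ((z, tau), true) a c t)%:R : R)
  <= #|slot_matching tau|%:R.
Proof.
rewrite (pair_bigA _ (fun a c => (semi_uses _ a c t)%:R)) /=.
by rewrite sum_indicator ler_nat card_semi_users.
Qed.

Lemma via_physical_edge (a b c : V) t (e : vvertex V) :
  (e, true) \in path_edges pi (ebs_via a b t c) ->
  semi_uses (e, true) a c t || semi_uses (e, true) c b (t + T%:Z).
Proof.
rewrite /semi_uses /path_edges /ebs_via /= !edges_from_cat mem_cat.
move=> /orP[->//|].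
rewrite mem_cat => /orP[h|].
  by have := edges_from_kind h; rewrite mem_nseq => /andP[].
rewrite semipath_reaches foldl_virtual /=.
have hs := @size_semi l n T c a t.
rewrite (_ : t + (size (semipath a c t))%:Z + (T - size (semipath a c t))%N%:Z
   = t + T%:Z); first by move=> ->; rewrite orbT.
by move: hs; rewrite /semipath; lia.
Qed.

Lemma semi_uses_window (a c : V) t (z : V) tau :
  semi_uses ((z, tau), true) a c t ->
  exists2 k : nat, (k < T)%N & t = tau - k%:Z.
Proof.
move=> /edges_from_time /= [h1 h2].
have hs := @size_semi l n T c a t.
exists `|tau - t|%N; last by lia.
by move: h2 hs; rewrite /semipath; lia.
Qed.

End EdgeUsage.

Section Throughput.
Variables (R : realType) (l m : nat).
Local Notation n := m.+2.
Local Notation V := (ebs_node l n).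
Local Notation pi := (ebs_pi l n).
Local Notation T := (ebs_T l n).
Local Notation N := ((n ^ l)%:R : R).

Lemma N_gt0 : 0 < N. Proof. by rewrite ltr0n expn_gt0. Qed.

(* Load of a physical edge (ebs_R is the uniform scheme over ebs_via), split
   along the two halves of the routing paths:
   the first semi-paths using it start at tau - k, the second ones at
   tau - T - k + T, for k < T. *)
Lemma ebs_load_split (D : int -> V -> V -> R) (z : V) (tau : int) :
  demand_nonneg D ->
  (load pi (flow_of (ebs_R l n R) D) ((z, tau), true) <=
   (\sum_(k < T) \sum_(a : V) \sum_(b : V) \sum_(c : V)
      D (tau - k%:Z) a b / N * (semi_uses ((z, tau), true) a c (tau - k%:Z))%:R
  + \sum_(k < T) \sum_(a : V) \sum_(b : V) \sum_(c : V)
      D (tau - T%:Z - k%:Z) a b / N *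
      (semi_uses ((z, tau), true) c b (tau - T%:Z - k%:Z + T%:Z))%:R)%:E)%E.
Proof.
move=> D0; set e := ((z, tau), true).
have w0 t a b : 0 <= D t a b / N by rewrite divr_ge0 // ltW // N_gt0.
rewrite (@uniform_scheme_load R V V pi (@ebs_via l n) N N_gt0 D _ D0).
pose G (h : V * V * int -> V -> bool) x :=
  \sum_(c : V) D x.2 x.1.1 x.1.2 / N * (h x c)%:R.
have G_ge0 h x : 0 <= G h x by apply: sumr_ge0 => c _; rewrite mulr_ge0.
have G_support (h : V * V * int -> V -> bool) t0 x :
    (forall c, h x c -> exists2 k : nat, (k < T)%N & x.2 = t0 - k%:Z) ->
    G h x != 0 -> exists2 k : nat, (k < T)%N & x.2 = t0 - k%:Z.
  move=> hw; case/boolP: [exists c, h x c] => [/existsP [c /hw] //|/existsPn hn].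
  by rewrite /G big1 ?eqxx // => c _; rewrite (negPf (hn c)) mulr0.
pose h1 : V * V * int -> V -> bool := fun x c => semi_uses e x.1.1 c x.2.
pose h2 : V * V * int -> V -> bool := fun x c => semi_uses e c x.1.2 (x.2 + T%:Z).
apply: le_trans (_ : \esum_(x in setT) ((G h1 x)%:E + (G h2 x)%:E) <= _)%E.
  apply: le_esum => -[[a b] t] _; rewrite -EFinD lee_fin /G /= -big_split.
  apply: ler_sum => c _ /=; rewrite -mulrDr ler_wpM2l // -natrD ler_nat.
  move: (@via_physical_edge l m a b c t (z, tau)); rewrite /e /h1 /h2 /=.
  by case: (_ \in _) => // /(_ isT); case: semi_uses; case: semi_uses.
rewrite esumD; try by move=> x _; rewrite lee_fin G_ge0.
rewrite (@esum_time_window R V T tau (G h1)) //; last first.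
  by move=> [[a b] t]; apply: G_support => c /semi_uses_window.
rewrite (@esum_time_window R V T (tau - T%:Z) (G h2)) //.
move=> [[a b] t]; apply: G_support => c /semi_uses_window [k hk ht].
by exists k => //; lia.
Qed.

(* The two halves together: T r d / N twice is at most 1 when r = 1/(2l)
   and d n <= N, since T d <= l (n - 1) N / n <= l N. *)
Lemma two_windows_le_one (hl : (1 <= l)%N) (d : nat) : (d * n <= n ^ l)%N ->
  T%:R * ((2 * l%:R)^-1 / N * d%:R) + T%:R * ((2 * l%:R)^-1 / N * d%:R) <= 1.
Proof.
move=> dn; have Td : (T * d <= l * n ^ l)%N.
  rewrite /ebs_T subn1 /= -mulnA leq_mul2l; apply/orP; right.
  by apply: leq_trans dn; rewrite mulnC leq_mul2l leqnSn orbT.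
have l0 : (l%:R : R) != 0 by rewrite pnatr_eq0; lia.
have N0 : N != 0 by rewrite gt_eqF // N_gt0.
have -> : T%:R * ((2 * l%:R)^-1 / N * d%:R) = (T * d)%:R / (2 * (l%:R * N)).
  by rewrite natrM; field; rewrite N0 l0.
suff : (T * d)%:R / (2 * (l%:R * N)) <= (2^-1 : R) by lra.
rewrite ler_pdivrMr; last by rewrite !mulr_gt0 ?N_gt0 // ltr0n; lia.
have -> : (2^-1 * (2 * (l%:R * N)) : R) = l%:R * N by field.
by rewrite -natrM ler_nat.
Qed.

(* Each time step contributes at most r |slot_matching tau| / N to each half. *)
Lemma ebs_throughput (hl : (1 <= l)%N) :
  guarantees_throughput pi (ebs_R l n R) (2 * l%:R)^-1.
Proof.
move=> D D0 Dr [z tau]; set r : R := (2 * l%:R)^-1.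
have r0 : 0 <= r by rewrite invr_ge0 mulr_ge0.
have rN0 : 0 <= r / N by rewrite divr_ge0 // ltW // N_gt0.
have w0 t a b : 0 <= D t a b / N by rewrite divr_ge0 // ltW // N_gt0.
set d := #|@slot_matching l m tau|.
have row t a : \sum_(b : V) D t a b / N <= r / N.
  by rewrite -mulr_suml ler_pM2r ?invr_gt0 ?N_gt0 //; exact: (Dr t).1.
have col t b : \sum_(a : V) D t a b / N <= r / N.
  by rewrite -mulr_suml ler_pM2r ?invr_gt0 ?N_gt0 //; exact: (Dr t).2.
have half1 : \sum_(k < T) \sum_(a : V) \sum_(b : V) \sum_(c : V)
    D (tau - k%:Z) a b / N * (semi_uses ((z, tau), true) a c (tau - k%:Z))%:R
    <= T%:R * (r / N * d%:R).
  apply: le_trans (_ : \sum_(k < T) r / N * d%:R <= _); last first.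
    by rewrite sumr_const card_ord mulr_natl.
  apply: ler_sum => k _.
  by apply: demand_row_count => //; exact: semi_users_sum.
have half2 : \sum_(k < T) \sum_(a : V) \sum_(b : V) \sum_(c : V)
    D (tau - T%:Z - k%:Z) a b / N *
    (semi_uses ((z, tau), true) c b (tau - T%:Z - k%:Z + T%:Z))%:R
    <= T%:R * (r / N * d%:R).
  apply: le_trans (_ : \sum_(k < T) r / N * d%:R <= _); last first.
    by rewrite sumr_const card_ord mulr_natl.
  apply: ler_sum => k _.
  by apply: demand_col_count => //; exact: semi_users_sum.
apply: le_trans (ebs_load_split D z tau D0) _; rewrite lee_fin.
exact: le_trans (lerD half1 half2) (two_windows_le_one hl d (@card_slot_matching l m tau)).
Qed.

End Throughput.

Lemma ebs_latency (R : realType) (l m : nat) :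
  max_latency_le (ebs_R l m.+2 R) (2 * l * (m.+2 - 1)).
Proof.
move=> a b t P; rewrite /ebs_R => hp.
case: (pickP (fun c => ebs_via a b t c == P)) => [c /eqP <- | h0]; last first.
  move: hp; rewrite (@eq_card0 _ _ _) ?mul0r ?ltxx //.
  by move=> x; rewrite !inE; apply/negbTE/negP => /set_mem /=; rewrite (h0 x).
rewrite /latency /ebs_via /= !size_cat size_nseq.
have h1 := @size_semi l m.+2 (ebs_T l m.+2) c a t.
have h2 := @size_semi l m.+2 (ebs_T l m.+2) b c (t + (ebs_T l m.+2)%:Z).
by rewrite /semipath; move: h1 h2; rewrite /ebs_T; lia.
Qed.

Theorem proposition4p1 (R : realType) (l n : nat) :
  (1 <= l)%N -> (2 <= n)%N ->
  guarantees_throughput (ebs_pi l n) (ebs_R l n R) (2 * l%:R)^-1 /\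
  max_latency_le (ebs_R l n R) (2 * l * (n - 1)) /\
  (forall r : R, r <= 2^-1 -> l%:R = (2 * r)^-1 ->
     guarantees_throughput (ebs_pi l n) (ebs_R l n R) r /\
     (forall (a b : ebs_node l n) (t : int) (P : vpath (ebs_node l n)),
        0 < ebs_R l n R a b t P ->
        (latency P)%:R <= r^-1 * (((n ^ l)%:R : R) `^ (2 * r) - 1))).
Proof.
move=> hl; case: n => [|[|m]] // _.
split; first exact: ebs_throughput.
split; first exact: ebs_latency.
move=> r _ hlr.
have l0 : (l%:R : R) != 0 by rewrite pnatr_eq0; lia.
have r0 : r != 0 by apply/eqP => r0; move: l0; rewrite hlr r0 mulr0 invr0 eqxx.
have rE : r = (2 * l%:R)^-1 by rewrite hlr; field.
split; first by rewrite rE; exact: ebs_throughput.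
move=> a b t P hp.
apply: le_trans (_ : ((2 * l * (m.+2 - 1))%:R : R) <= _).
  by rewrite ler_nat; exact: ebs_latency hp.
(* with 2 r = 1 / l, N^(2r) = n, and 1 / r = 2 l *)
have h2r : 2 * r = (l%:R)^-1 by rewrite hlr invrK.
rewrite h2r natrX -powR_mulrn // -powRrM mulfV // powRr1 //.
by rewrite rE invrK !natrM natrB //= mulrA.
Qed.
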